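(* Let $(X,d)$ be a compact metric space and let $f_1,f_2:X\to X$ be continuous. Suppose there is $c\in X$ with $f_1(x)=c$ for all $x\in X$, $f_2(c)=c$, and $f_2$ is accessible. Then the multiple mapping $F=\{f_1,f_2\}$ is (Hausdorff metric) accessible.
   Context: For the multiple mapping $F=\{f_1,f_2\}$ and $n\ge 1$, $F^n(x)=\{f_{i_1}f_{i_2}\cdots f_{i_n}(x)\mid i_1,\dots,i_n\in\{1,2\}\}$. The Hausdorff metric on nonempty compact subsets is $d_H(A,B)=\max\{\sup_{a\in A}\inf_{b\in B}d(a,b),\sup_{b\in B}\inf_{a\in A}d(a,b)\}$. $F$ is (Hausdorff metric) accessible if for every $\epsilon>0$ and all nonempty open $U,V\subset X$ there exist $x\in U$, $y\in V$ and $n\in\mathbb{Z}^+$ with $d_H(F^n(x),F^n(y))<\epsilon$. A continuous $f:X\to X$ is accessible if for every $\epsilon>0$ and all nonempty open $U,V\subset X$ there exist $x\in U$, $y\in V$ and $n\in\mathbb{Z}^+$ with $d(f^n(x),f^n(y))<\epsilon$. Here $\mathbb{Z}^+=\{1,2,\dots\}$. *)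

From Stdlib Require Import Reals List.
Import ListNotations.
Open Scope R_scope.

Record is_metric {X : Type} (d : X -> X -> R) : Prop := {
  metric_nonneg : forall x y, 0 <= d x y;
  metric_eq0 : forall x y, d x y = 0 <-> x = y;
  metric_sym : forall x y, d x y = d y x;
  metric_tri : forall x y z, d x z <= d x y + d y z
}.

Definition d_open {X : Type} (d : X -> X -> R) (U : X -> Prop) : Prop :=
  forall x, U x -> exists r, 0 < r /\ forall y, d x y < r -> U y.

Definition d_compact {X : Type} (d : X -> X -> R) : Prop :=
  forall (I : Type) (U : I -> X -> Prop),
    (forall i, d_open d (U i)) ->
    (forall x, exists i, U i x) ->
    exists l : list I, forall x, exists i, In i l /\ U i x.

Definition d_continuous {X : Type} (d : X -> X -> R) (f : X -> X) : Prop :=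
  forall x eps, 0 < eps -> exists delta, 0 < delta /\
    forall y, d x y < delta -> d (f x) (f y) < eps.

Definition accessible {X : Type} (d : X -> X -> R) (f : X -> X) : Prop :=
  forall eps (U V : X -> Prop), 0 < eps ->
    d_open d U -> (exists u, U u) -> d_open d V -> (exists v, V v) ->
    exists x y n, U x /\ V y /\ (1 <= n)%nat /\
      d (Nat.iter n f x) (Nat.iter n f y) < eps.

(* F^n(x) for F = {f1,f2}, as the (finite) list of all
   f_{i1} (f_{i2} ( ... f_{in} x)); F^0(x) = [x]. *)
Fixpoint Fiter {X : Type} (f1 f2 : X -> X) (n : nat) (x : X) : list X :=
  match n with
  | O => [x]
  | S m => map f1 (Fiter f1 f2 m x) ++ map f2 (Fiter f1 f2 m x)
  end.

Fixpoint lmax (l : list R) : R :=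
  match l with
  | [] => 0
  | [a] => a
  | a :: t => Rmax a (lmax t)
  end.
Fixpoint lmin (l : list R) : R :=
  match l with
  | [] => 0
  | [a] => a
  | a :: t => Rmin a (lmin t)
  end.

(* Hausdorff distance between nonempty finite sets given as lists:
   max { sup_{a in A} inf_{b in B} d a b , sup_{b in B} inf_{a in A} d a b } *)
Definition dH {X : Type} (d : X -> X -> R) (A B : list X) : R :=
  Rmax (lmax (map (fun a => lmin (map (d a) B)) A))
       (lmax (map (fun b => lmin (map (fun a => d a b) A)) B)).

Definition H_accessible {X : Type} (d : X -> X -> R) (f1 f2 : X -> X) : Prop :=
  forall eps (U V : X -> Prop), 0 < eps ->
    d_open d U -> (exists u, U u) -> d_open d V -> (exists v, V v) ->
    exists x y n, U x /\ V y /\ (1 <= n)%nat /\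
      dH d (Fiter f1 f2 n x) (Fiter f1 f2 n y) < eps.

(* Since f1 is constant with value c and f2 fixes c, every point of F^n(x) other
   than f2^n(x) equals c, while both f2^n(x) and (for n >= 1) c belong to F^n(x).
   Hence F^n(x) = {c, f2^n(x)}, and matching c with c and f2^n(x) with f2^n(y)
   bounds the Hausdorff distance by d(f2^n x, f2^n y).  The pairs witnessing
   accessibility of f2 therefore witness accessibility of F. *)

From Stdlib Require Import Reals List Lra.
Open Scope R_scope.

Lemma lmax_lub (l : list R) (M : R) :
  0 <= M -> (forall r, In r l -> r <= M) -> lmax l <= M.
Proof.
  intros HM; induction l as [|a [|b t] IH]; intros Hl; simpl.
  - exact HM.
  - apply Hl; left; reflexivity.
  - apply Rmax_lub; [apply Hl; left; reflexivity|].
    apply IH; intros r Hr; apply Hl; right; exact Hr.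
Qed.

Lemma lmin_le (l : list R) (r : R) : In r l -> lmin l <= r.
Proof.
  induction l as [|a [|b t] IH]; intros Hr; [destruct Hr| |].
  - destruct Hr as [<-|[]]; apply Rle_refl.
  - destruct Hr as [<-|Hr].
    + apply Rmin_l.
    + apply Rle_trans with (lmin (b :: t)); [apply Rmin_r | exact (IH Hr)].
Qed.

Lemma dH_le {X : Type} (d : X -> X -> R) (A B : list X) (M : R) :
  0 <= M ->
  (forall a, In a A -> exists b, In b B /\ d a b <= M) ->
  (forall b, In b B -> exists a, In a A /\ d a b <= M) ->
  dH d A B <= M.
Proof.
  intros HM HAB HBA; unfold dH.
  apply Rmax_lub; apply lmax_lub; auto; intros r Hr;
    apply in_map_iff in Hr; destruct Hr as [u [<- Hu]].
  - destruct (HAB u Hu) as [v [Hv Hle]].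
    apply Rle_trans with (d u v); [apply lmin_le, in_map, Hv | exact Hle].
  - destruct (HBA u Hu) as [v [Hv Hle]].
    apply Rle_trans with (d v u);
      [apply lmin_le, (in_map (fun a => d a u)), Hv | exact Hle].
Qed.

Section ConstantFirstMap.
Variables (X : Type) (f1 f2 : X -> X) (c : X).
Hypothesis f1_const : forall x, f1 x = c.
Hypothesis f2_fix : f2 c = c.

Lemma in_Fiter n x u :
  In u (Fiter f1 f2 n x) -> u = c \/ u = Nat.iter n f2 x.
Proof.
  revert u; induction n as [|n IH]; intros u Hu; simpl in Hu.
  - destruct Hu as [<-|[]]; right; reflexivity.
  - apply in_app_or in Hu; destruct Hu as [Hu|Hu];
      apply in_map_iff in Hu; destruct Hu as [v [<- Hv]].
    + left; apply f1_const.
    + destruct (IH v Hv) as [-> | ->]; [left; exact f2_fix | right; reflexivity].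
Qed.

Lemma iter_in_Fiter n x : In (Nat.iter n f2 x) (Fiter f1 f2 n x).
Proof.
  induction n as [|n IH]; simpl; [left; reflexivity|].
  apply in_or_app; right; apply in_map, IH.
Qed.

Lemma const_in_Fiter n x : (1 <= n)%nat -> In c (Fiter f1 f2 n x).
Proof.
  destruct n as [|n]; intros Hn; [inversion Hn|]; simpl.
  apply in_or_app; left; rewrite <- (f1_const (Nat.iter n f2 x)).
  apply in_map, iter_in_Fiter.
Qed.

Lemma dH_Fiter_le (d : X -> X -> R) n x y :
  is_metric d -> (1 <= n)%nat ->
  dH d (Fiter f1 f2 n x) (Fiter f1 f2 n y)
    <= d (Nat.iter n f2 x) (Nat.iter n f2 y).
Proof.
  intros Hd Hn.
  assert (Hcc : d c c = 0) by (apply (metric_eq0 d Hd); reflexivity).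
  assert (Hpos : 0 <= d (Nat.iter n f2 x) (Nat.iter n f2 y))
    by apply (metric_nonneg d Hd).
  apply dH_le; [exact Hpos | intros u Hu | intros u Hu].
  - destruct (in_Fiter n x u Hu) as [-> | ->].
    + exists c; split; [apply const_in_Fiter, Hn | lra].
    + exists (Nat.iter n f2 y); split; [apply iter_in_Fiter | apply Rle_refl].
  - destruct (in_Fiter n y u Hu) as [-> | ->].
    + exists c; split; [apply const_in_Fiter, Hn | lra].
    + exists (Nat.iter n f2 x); split; [apply iter_in_Fiter | apply Rle_refl].
Qed.

End ConstantFirstMap.

Theorem theorem3p8 (X : Type) (d : X -> X -> R) (f1 f2 : X -> X) (c : X) :
  is_metric d -> d_compact d ->
  d_continuous d f1 -> d_continuous d f2 ->
  (forall x, f1 x = c) -> f2 c = c -> accessible d f2 ->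
  H_accessible d f1 f2.
Proof.
  intros Hd _ _ _ f1_const f2_fix Hacc eps U V Heps HU HUne HV HVne.
  destruct (Hacc eps U V Heps HU HUne HV HVne) as [x [y [n [Ux [Vy [Hn Hclose]]]]]].
  exists x, y, n; repeat split; try assumption.
  eapply Rle_lt_trans; [apply (dH_Fiter_le X f1 f2 c); assumption | exact Hclose].
Qed.
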